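(* Let $\alpha,\beta\in\mathbb{R}$ with $\beta-\alpha-2\neq0$, and set $\mathbf C_{\alpha,\beta}=\frac{(\beta-3)(2\alpha-\beta+1)}{4}$. For every $f\in C_0^\infty((0,\infty))$ (complex-valued), with $f^\#(r)=f''(r)+\frac{\beta-2}{r}f'(r)+\frac{(\beta-3)^2}{4r^2}f(r)$, \[ \left\|\frac{f'}{r}+\frac{\beta-3}{2r^2}f\right\|_{L^2_\beta}^2=\frac{1}{(\beta-\alpha-2)^2}\left\|\mathfrak L_\alpha f+\mathbf C_{\alpha,\beta}\frac{f}{r^2}\right\|_{L^2_\beta}^2-\frac{1}{(\beta-\alpha-2)^2}\left\|f^\#\right\|_{L^2_\beta}^2 . \]
   Context: For $\beta\in\mathbb{R}$, $L^2_\beta$ denotes the weighted space on $(0,\infty)$ with norm $\|g\|_{L^2_\beta}^2=\int_0^\infty |g(r)|^2 r^\beta\,dr$. For $\alpha\in\mathbb{R}$, $\mathfrak L_\alpha$ is the operator $\mathfrak L_\alpha f(r)=f''(r)+\frac{\alpha}{r}f'(r)$. Expressions such as $f/r^2$ denote the function $r\mapsto f(r)/r^2$. *)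

From Stdlib Require Import Reals.
From Coquelicot Require Import Coquelicot.
Open Scope R_scope.

Definition ReF (f : R -> C) : R -> R := fun t => Re (f t).
Definition ImF (f : R -> C) : R -> R := fun t => Im (f t).

Definition Cder (f : R -> C) : R -> C :=
  fun x => (Derive (ReF f) x, Derive (ImF f) x).

(* f in C_0^infty((0,oo)): smooth on (0,oo) with compact support inside (0,oo).
   (Values at r <= 0 are irrelevant.) *)
Definition smooth_pos (f : R -> C) : Prop :=
  forall (n : nat) (x : R), 0 < x -> ex_derive_n (ReF f) n x /\ ex_derive_n (ImF f) n x.

Definition compact_support_pos (f : R -> C) : Prop :=
  exists a b : R, 0 < a /\ a < b /\
    forall x : R, 0 < x -> (x < a \/ b < x) -> f x = RtoC 0.

Definition Cc_infty_pos (f : R -> C) : Prop := smooth_pos f /\ compact_support_pos f.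

Definition L2w_sq (beta : R) (g : R -> C) : R :=
  RInt_gen (fun r => (Cmod (g r)) ^ 2 * Rpower r beta) (at_right 0) (Rbar_locally p_infty).

Definition frakL (alpha : R) (f : R -> C) : R -> C :=
  fun r => (Cder (Cder f) r + RtoC (alpha / r) * Cder f r)%C.

Definition Cab (alpha beta : R) : R := (beta - 3) * (2 * alpha - beta + 1) / 4.

Definition fsharp (beta : R) (f : R -> C) : R -> C :=
  fun r => (Cder (Cder f) r + RtoC ((beta - 2) / r) * Cder f r
            + RtoC ((beta - 3) ^ 2 / (4 * r ^ 2)) * f r)%C.

From Stdlib Require Import Reals Lra.
From Coquelicot Require Import Coquelicot.
Open Scope R_scope.

(* Write g = f'/r + (beta-3)/(2 r^2) f, A = L_alpha f + C f/r^2,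
   S = f^#, k = beta - alpha - 2 and w(r) = r^beta.  For a REAL function u
   one checks the pointwise identity, valid for every r > 0,
        k^2 g^2 w = A^2 w - S^2 w + k (r w g^2)',
   i.e. the defect k^2 g^2 - A^2 + S^2 is an exact derivative (the "flux"
   r^(beta+1) g^2 differentiated).  For u smooth with compact support in
   (0,oo) the flux vanishes near both ends, so integrating gives
        k^2 ||g||^2 = ||A||^2 - ||S||^2.
   All three quantities are quadratic and |z|^2 = (Re z)^2 + (Im z)^2, so the
   complex statement follows by applying the real identity to Re f and Im f. *)

Definition vanishes_outside (u : R -> R) (a b : R) : Prop :=
  forall x, 0 < x -> x < a \/ b < x -> u x = 0.

(* Three derivatives exist on (0,oo); the third only serves to make the
   second derivative continuous. *)
Definition thrice_differentiable (u : R -> R) : Prop :=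
  forall x, 0 < x ->
    ex_derive u x /\ ex_derive (Derive u) x /\ ex_derive (Derive (Derive u)) x.

Lemma is_RInt_vanishing (G : R -> R) x y :
  (forall t, Rmin x y < t < Rmax x y -> G t = 0) -> is_RInt G x y 0.
Proof.
  intros H. apply is_RInt_ext with (fun _ => 0).
  - intros t Ht. symmetry. auto.
  - pose proof (is_RInt_const (V:=R_NormedModule) x y zero) as E.
    rewrite (scal_zero_r (K:=R_AbsRing) (V:=R_NormedModule)) in E. exact E.
Qed.

Lemma is_RInt_gen_of_support (G : R -> R) c d :
  0 < c -> c < d -> vanishes_outside G c d ->
  (forall x, c <= x <= d -> continuous G x) ->
  is_RInt_gen G (at_right 0) (Rbar_locally p_infty) (RInt G c d).
Proof.
  intros Hc Hcd HG Hcont P HP.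
  assert (HI : is_RInt G c d (RInt G c d)).
  { apply (RInt_correct (V:=R_CompleteNormedModule)), ex_RInt_continuous.
    intros z Hz. rewrite Rmin_left, Rmax_right in Hz by lra. auto. }
  exists (fun x => 0 < x < c) (fun y => d < y).
  - exists (mkposreal c Hc). intros y Hy Hy0. split; [exact Hy0|].
    apply Rabs_def2 in Hy. simpl in Hy. unfold minus, plus, opp in Hy; simpl in Hy. lra.
  - exists d. auto.
  - intros x y Hx Hy. cbv beta in Hx, Hy. exists (RInt G c d).
    split; [|apply locally_singleton; auto]. simpl.
    replace (RInt G c d) with (plus (0 : R) (plus (RInt G c d) 0))
      by (unfold plus; simpl; ring).
    apply (is_RInt_Chasles (V:=R_NormedModule)) with c.
    + apply is_RInt_vanishing. intros t Ht.
      rewrite Rmin_left, Rmax_right in Ht by lra. apply HG; [lra | left; lra].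
    + apply (is_RInt_Chasles (V:=R_NormedModule)) with d; [exact HI|].
      apply is_RInt_vanishing. intros t Ht.
      rewrite Rmin_left in Ht by lra. apply HG; [lra | right; lra].
Qed.

Lemma Derive_vanishes_outside (u : R -> R) a b :
  0 < a -> vanishes_outside u a b -> vanishes_outside (Derive u) a b.
Proof.
  intros Ha Hu x Hx Hout.
  rewrite (Derive_ext_loc u (fun _ => 0)); [apply Derive_const|].
  destruct Hout as [Hxa|Hbx].
  - assert (He : 0 < Rmin x (a - x)) by (apply Rmin_glb_lt; lra).
    exists (mkposreal _ He). intros y Hy.
    apply Rabs_def2 in Hy. simpl in Hy. unfold minus, plus, opp in Hy; simpl in Hy.
    pose proof (Rmin_l x (a - x)). pose proof (Rmin_r x (a - x)).
    apply Hu; [lra | left; lra].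
  - assert (He : 0 < Rmin x (x - b)) by (apply Rmin_glb_lt; lra).
    exists (mkposreal _ He). intros y Hy.
    apply Rabs_def2 in Hy. simpl in Hy. unfold minus, plus, opp in Hy; simpl in Hy.
    pose proof (Rmin_l x (x - b)). pose proof (Rmin_r x (x - b)).
    apply Hu; [lra | right; lra].
Qed.

Lemma jet_vanishes_outside (Phi : R -> R -> R -> R -> R) (u : R -> R) a b :
  0 < a -> (forall x, Phi x 0 0 0 = 0) -> vanishes_outside u a b ->
  vanishes_outside (fun x => Phi x (u x) (Derive u x) (Derive (Derive u) x)) a b.
Proof.
  intros Ha HPhi Hu.
  pose proof (Derive_vanishes_outside u a b Ha Hu) as Hu1.
  pose proof (Derive_vanishes_outside _ a b Ha Hu1) as Hu2.
  intros x Hx Hout. rewrite Hu, Hu1, Hu2 by assumption. apply HPhi.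
Qed.

Lemma vanishes_outside_widen (u : R -> R) a b c d :
  c <= a -> b <= d -> vanishes_outside u a b -> vanishes_outside u c d.
Proof.
  intros Hca Hbd Hu x Hx Hout. apply Hu; [exact Hx|].
  destruct Hout; [left | right]; lra.
Qed.

Section WeightedIdentity.
Variables alpha beta : R.

(* Values at r of g, of its derivative g', of A and of S, in terms of the
   jet (u0,u1,u2) = (u(r), u'(r), u''(r)). *)
Definition hardy_val (r u0 u1 : R) : R := u1 / r + (beta - 3) / (2 * r ^ 2) * u0.
Definition hardy_dval (r u0 u1 u2 : R) : R :=
  u2 / r - u1 / r ^ 2 + (beta - 3) / 2 * (u1 / r ^ 2 - 2 * u0 / r ^ 3).
Definition Lop_val (r u0 u1 u2 : R) : R :=
  u2 + alpha / r * u1 + Cab alpha beta / r ^ 2 * u0.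
Definition sharp_val (r u0 u1 u2 : R) : R :=
  u2 + (beta - 2) / r * u1 + (beta - 3) ^ 2 / (4 * r ^ 2) * u0.

Definition hardy_fun (u : R -> R) (r : R) : R := hardy_val r (u r) (Derive u r).
Definition Lop_fun (u : R -> R) (r : R) : R :=
  Lop_val r (u r) (Derive u r) (Derive (Derive u) r).
Definition sharp_fun (u : R -> R) (r : R) : R :=
  sharp_val r (u r) (Derive u r) (Derive (Derive u) r).

Definition wsq (p : R -> R) (r : R) : R := p r ^ 2 * Rpower r beta.

Definition flux (u : R -> R) (r : R) : R := r * Rpower r beta * hardy_fun u r ^ 2.
Definition flux_deriv (u : R -> R) (r : R) : R :=
  (beta + 1) * Rpower r beta * hardy_fun u r ^ 2
  + 2 * r * Rpower r beta * hardy_fun u r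
      * hardy_dval r (u r) (Derive u r) (Derive (Derive u) r).

Lemma pointwise_identity r u0 u1 u2 w : 0 < r ->
  (beta - alpha - 2) ^ 2 * (hardy_val r u0 u1 ^ 2 * w)
  = Lop_val r u0 u1 u2 ^ 2 * w - sharp_val r u0 u1 u2 ^ 2 * w
    + (beta - alpha - 2) * ((beta + 1) * w * hardy_val r u0 u1 ^ 2
        + 2 * r * w * hardy_val r u0 u1 * hardy_dval r u0 u1 u2).
Proof. intros Hr. unfold hardy_val, hardy_dval, Lop_val, sharp_val, Cab. field. lra. Qed.

(* The flux is differentiable on (0,oo) with derivative flux_deriv; this uses
   r w' = beta w and g' = hardy_dval. *)
Lemma flux_is_derive (u : R -> R) x :
  thrice_differentiable u -> 0 < x -> is_derive (flux u) x (flux_deriv u x).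
Proof.
  intros Hu Hx. destruct (Hu x Hx) as [Hu1 [Hu2 _]].
  unfold flux, flux_deriv, hardy_fun, hardy_val, hardy_dval, Rpower.
  auto_derive.
  - repeat split; try assumption; nra.
  - change (Derive (fun y => Derive u y) x) with (Derive (Derive u) x).
    change (Derive (fun y => u y) x) with (Derive u x).
    field. lra.
Qed.

Lemma integrands_continuous (u : R -> R) x :
  thrice_differentiable u -> 0 < x ->
  continuous (wsq (hardy_fun u)) x /\ continuous (wsq (Lop_fun u)) x /\
  continuous (wsq (sharp_fun u)) x /\ continuous (flux_deriv u) x.
Proof.
  intros Hu Hx. destruct (Hu x Hx) as [Hu1 [Hu2 Hu3]].
  pose proof (pow_lt x 3 Hx) as Hx3; simpl in Hx3.
  repeat split; apply (ex_derive_continuous (K:=R_AbsRing) (V:=R_NormedModule));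
    unfold wsq, flux_deriv, hardy_fun, Lop_fun, sharp_fun,
      hardy_val, hardy_dval, Lop_val, sharp_val, Rpower;
    auto_derive; repeat split; try assumption; nra.
Qed.

Lemma interval_identity (u : R -> R) c d :
  0 < c -> c < d -> thrice_differentiable u -> flux u c = 0 -> flux u d = 0 ->
  (beta - alpha - 2) ^ 2 * RInt (wsq (hardy_fun u)) c d
  = RInt (wsq (Lop_fun u)) c d - RInt (wsq (sharp_fun u)) c d.
Proof.
  intros Hc Hcd Hu Hfc Hfd.
  assert (Hcont : forall x, c <= x <= d ->
    continuous (wsq (hardy_fun u)) x /\ continuous (wsq (Lop_fun u)) x /\
    continuous (wsq (sharp_fun u)) x /\ continuous (flux_deriv u) x)
    by (intros x Hx; apply integrands_continuous; [exact Hu | lra]).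
  assert (Hex : forall G : R -> R, (forall x, c <= x <= d -> continuous G x) -> ex_RInt G c d).
  { intros G HG. apply (ex_RInt_continuous (V:=R_CompleteNormedModule)). intros z Hz.
    rewrite Rmin_left, Rmax_right in Hz by lra. auto. }
  assert (Hg : ex_RInt (wsq (hardy_fun u)) c d) by (apply Hex; apply Hcont).
  assert (HA : ex_RInt (wsq (Lop_fun u)) c d) by (apply Hex; apply Hcont).
  assert (HS : ex_RInt (wsq (sharp_fun u)) c d) by (apply Hex; apply Hcont).
  assert (HF : ex_RInt (flux_deriv u) c d) by (apply Hex; apply Hcont).
  assert (Hflux : RInt (flux_deriv u) c d = 0).
  { apply is_RInt_unique.
    replace 0 with (minus (flux u d) (flux u c))
      by (rewrite Hfc, Hfd; unfold minus, plus, opp; simpl; ring).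
    apply (is_RInt_derive (V:=R_CompleteNormedModule)); intros x Hx;
      rewrite Rmin_left, Rmax_right in Hx by lra.
    - apply flux_is_derive; [exact Hu | lra].
    - apply Hcont; lra. }
  rewrite <- (RInt_scal (wsq (hardy_fun u))) by exact Hg.
  rewrite (RInt_ext _ (fun x => wsq (Lop_fun u) x - wsq (sharp_fun u) x
                                 + (beta - alpha - 2) * flux_deriv u x)).
  2:{ intros x Hx. rewrite Rmin_left, Rmax_right in Hx by lra.
      unfold wsq, Lop_fun, sharp_fun, flux_deriv, hardy_fun.
      apply pointwise_identity. lra. }
  rewrite (RInt_plus (fun x => wsq (Lop_fun u) x - wsq (sharp_fun u) x)
                     (fun x => (beta - alpha - 2) * flux_deriv u x)).
  - rewrite (RInt_minus (wsq (Lop_fun u))) by assumption.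
    rewrite (RInt_scal (flux_deriv u)), Hflux by assumption.
    unfold minus, plus, opp, scal; simpl; unfold mult, plus; simpl. ring.
  - apply (ex_RInt_minus (wsq (Lop_fun u))); assumption.
  - apply (ex_RInt_scal (flux_deriv u)); assumption.
Qed.

Lemma weighted_identity_real (u : R -> R) a b :
  0 < a -> a < b -> thrice_differentiable u -> vanishes_outside u a b ->
  exists lg lA lS,
    is_RInt_gen (wsq (hardy_fun u)) (at_right 0) (Rbar_locally p_infty) lg /\
    is_RInt_gen (wsq (Lop_fun u)) (at_right 0) (Rbar_locally p_infty) lA /\
    is_RInt_gen (wsq (sharp_fun u)) (at_right 0) (Rbar_locally p_infty) lS /\
    (beta - alpha - 2) ^ 2 * lg = lA - lS.
Proof.
  intros Ha Hab Hu Hsupp.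
  (* Enlarge [a,b] to [c,d] so that the flux vanishes at c and d. *)
  set (c := a / 2). set (d := b + 1).
  assert (Hc : 0 < c) by (unfold c; lra).
  assert (Hcd : c < d) by (unfold c, d; lra).
  assert (Hjet : forall Phi : R -> R -> R -> R -> R, (forall x, Phi x 0 0 0 = 0) ->
    vanishes_outside (fun x => Phi x (u x) (Derive u x) (Derive (Derive u) x)) c d).
  { intros Phi HPhi. apply (vanishes_outside_widen _ a b); [unfold c; lra | unfold d; lra |].
    apply jet_vanishes_outside; assumption. }
  assert (Hflux : vanishes_outside (flux u) a b).
  { apply (jet_vanishes_outside (fun x u0 u1 _ => x * Rpower x beta * hardy_val x u0 u1 ^ 2));
      [exact Ha | intros x; unfold hardy_val, Rdiv; ring | exact Hsupp]. }
  assert (Hcont : forall x, c <= x <= d ->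
    continuous (wsq (hardy_fun u)) x /\ continuous (wsq (Lop_fun u)) x /\
    continuous (wsq (sharp_fun u)) x /\ continuous (flux_deriv u) x)
    by (intros x Hx; apply integrands_continuous; [exact Hu | lra]).
  exists (RInt (wsq (hardy_fun u)) c d), (RInt (wsq (Lop_fun u)) c d),
    (RInt (wsq (sharp_fun u)) c d).
  repeat split.
  - apply is_RInt_gen_of_support; try assumption; [|apply Hcont].
    apply (Hjet (fun x u0 u1 _ => hardy_val x u0 u1 ^ 2 * Rpower x beta)).
    intros x. unfold hardy_val, Rdiv. ring.
  - apply is_RInt_gen_of_support; try assumption; [|apply Hcont].
    apply (Hjet (fun x u0 u1 u2 => Lop_val x u0 u1 u2 ^ 2 * Rpower x beta)).
    intros x. unfold Lop_val, Rdiv. ring.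
  - apply is_RInt_gen_of_support; try assumption; [|apply Hcont].
    apply (Hjet (fun x u0 u1 u2 => sharp_val x u0 u1 u2 ^ 2 * Rpower x beta)).
    intros x. unfold sharp_val, Rdiv. ring.
  - apply interval_identity; try assumption.
    + apply Hflux; [exact Hc | left; unfold c; lra].
    + apply Hflux; [unfold d; lra | right; unfold d; lra].
Qed.

End WeightedIdentity.

Lemma Cmod_sq (z : C) : Cmod z ^ 2 = Re z ^ 2 + Im z ^ 2.
Proof. apply pow2_sqrt, Rplus_le_le_0_compat; apply pow2_ge_0. Qed.

Lemma L2w_sq_parts beta (F : R -> C) (p q : R -> R) lp lq :
  (forall r, Re (F r) = p r /\ Im (F r) = q r) ->
  is_RInt_gen (wsq beta p) (at_right 0) (Rbar_locally p_infty) lp ->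
  is_RInt_gen (wsq beta q) (at_right 0) (Rbar_locally p_infty) lq ->
  L2w_sq beta F = lp + lq.
Proof.
  intros Hpq Ip Iq. unfold L2w_sq.
  apply is_RInt_gen_unique.
  apply (is_RInt_gen_ext (fun r => plus (wsq beta p r) (wsq beta q r))).
  - apply filter_forall. intros ab x _. destruct (Hpq x) as [Hp Hq].
    rewrite Cmod_sq, Hp, Hq. unfold wsq, plus; simpl. ring.
  - exact (is_RInt_gen_plus _ _ _ _ Ip Iq).
Qed.

Lemma Cc_infty_pos_parts (f : R -> C) :
  Cc_infty_pos f -> exists a b, 0 < a /\ a < b /\
    thrice_differentiable (ReF f) /\ thrice_differentiable (ImF f) /\
    vanishes_outside (ReF f) a b /\ vanishes_outside (ImF f) a b.
Proof.
  intros [Hs [a [b [Ha [Hab Hz]]]]].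
  exists a, b. refine (conj Ha (conj Hab (conj _ (conj _ (conj _ _))))).
  - intros x Hx. exact (conj (proj1 (Hs 1%nat x Hx))
      (conj (proj1 (Hs 2%nat x Hx)) (proj1 (Hs 3%nat x Hx)))).
  - intros x Hx. exact (conj (proj2 (Hs 1%nat x Hx))
      (conj (proj2 (Hs 2%nat x Hx)) (proj2 (Hs 3%nat x Hx)))).
  - intros x Hx Hout. unfold ReF. rewrite Hz by assumption. reflexivity.
  - intros x Hx Hout. unfold ImF. rewrite Hz by assumption. reflexivity.
Qed.

Lemma C_parts (f : R -> C) r : f r = (ReF f r, ImF f r).
Proof. unfold ReF, ImF. destruct (f r); reflexivity. Qed.

Lemma Cder_parts (f : R -> C) r : Cder f r = (Derive (ReF f) r, Derive (ImF f) r).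
Proof. reflexivity. Qed.

Lemma Cder2_parts (f : R -> C) r :
  Cder (Cder f) r = (Derive (Derive (ReF f)) r, Derive (Derive (ImF f)) r).
Proof. reflexivity. Qed.

Lemma hardy_parts beta (f : R -> C) r :
  Re (Cder f r * RtoC (/ r) + RtoC ((beta - 3) / (2 * r ^ 2)) * f r)%C
    = hardy_fun beta (ReF f) r /\
  Im (Cder f r * RtoC (/ r) + RtoC ((beta - 3) / (2 * r ^ 2)) * f r)%C
    = hardy_fun beta (ImF f) r.
Proof.
  rewrite Cder_parts, (C_parts f r). cbn [Re Im Cplus Cmult RtoC fst snd].
  unfold hardy_fun, hardy_val, Rdiv. split; ring.
Qed.

Lemma Lop_parts alpha beta (f : R -> C) r :
  Re (frakL alpha f r + RtoC (Cab alpha beta / r ^ 2) * f r)%C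
    = Lop_fun alpha beta (ReF f) r /\
  Im (frakL alpha f r + RtoC (Cab alpha beta / r ^ 2) * f r)%C
    = Lop_fun alpha beta (ImF f) r.
Proof.
  unfold frakL. rewrite Cder2_parts, Cder_parts, (C_parts f r).
  cbn [Re Im Cplus Cmult RtoC fst snd].
  unfold Lop_fun, Lop_val, Rdiv. split; ring.
Qed.

Lemma sharp_parts beta (f : R -> C) r :
  Re (fsharp beta f r) = sharp_fun beta (ReF f) r /\
  Im (fsharp beta f r) = sharp_fun beta (ImF f) r.
Proof.
  unfold fsharp. rewrite Cder2_parts, Cder_parts, (C_parts f r).
  cbn [Re Im Cplus Cmult RtoC fst snd].
  unfold sharp_fun, sharp_val, Rdiv. split; ring.
Qed.

Theorem mainTheorem7 (alpha beta : R) (hab : beta - alpha - 2 <> 0)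
  (f : R -> C) (hf : Cc_infty_pos f) :
  L2w_sq beta (fun r => (Cder f r * RtoC (/ r) + RtoC ((beta - 3) / (2 * r ^ 2)) * f r)%C)
  = / (beta - alpha - 2) ^ 2
      * L2w_sq beta (fun r => (frakL alpha f r + RtoC (Cab alpha beta / r ^ 2) * f r)%C)
    - / (beta - alpha - 2) ^ 2 * L2w_sq beta (fsharp beta f).
Proof.
  destruct (Cc_infty_pos_parts f hf) as (a & b & Ha & Hab & Hu & Hv & Zu & Zv).
  destruct (weighted_identity_real alpha beta (ReF f) a b Ha Hab Hu Zu)
    as (gu & Au & Su & Igu & IAu & ISu & Eu).
  destruct (weighted_identity_real alpha beta (ImF f) a b Ha Hab Hv Zv)
    as (gv & Av & Sv & Igv & IAv & ISv & Ev).
  rewrite (L2w_sq_parts _ _ _ _ _ _ (hardy_parts beta f) Igu Igv),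
    (L2w_sq_parts _ _ _ _ _ _ (Lop_parts alpha beta f) IAu IAv),
    (L2w_sq_parts _ _ _ _ _ _ (sharp_parts beta f) ISu ISv).
  replace (Au + Av) with ((beta - alpha - 2) ^ 2 * (gu + gv) + (Su + Sv))
    by (rewrite Rmult_plus_distr_l, Eu, Ev; ring).
  field. exact hab.
Qed.
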